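(* Let $P$ be an $\omega$-polygraph and $g$ a generator of $P$, so that $(P,g)\in\mathrm{Elt}(\mathrm{Pol}_\omega)$, and let $U(P,g)=(P,g)\in\mathrm{Elt}(\mathrm{Pol}_\omega^* )$, where $g$ is regarded as a cell of $P^*$. Then (1) $(P,g)$ is principal if and only if $U(P,g)$ is principal; (2) $(P,g)$ is a plex if and only if $U(P,g)$ is a polyplex.
   Context: An $\omega$-precategory is an $\omega$-globular set with identities and compositions satisfying the axioms of strict $\omega$-categories except the interchange law. An $\omega$-polygraph $P$ consists of sets $P_k$ of $k$-generators with globular sources/targets in the free precategory on lower generators; $P^*$ is its free $\omega$-precategory, and generators are identified with cells of $P^*$ (the embedding is injective); $\mathrm{Pol}_\omega$ is the category of $\omega$-polygraphs and generator-wise morphisms $F$, inducing prefunctors $F^*$. For a functor $|-|\colon\mathcal C\to\mathrm{Set}$, $\mathrm{Elt}(\mathcal C)$ has objects $(X,x)$, $x\in|X|$, and morphisms $f\colon(X,x)\to(Y,y)$ with $|f|(x)=y$. $\mathrm{Elt}(\mathrm{Pol}_\omega)$ uses $|P|=\bigsqcup_kP_k$ (generators); $\mathrm{Elt}(\mathrm{Pol}_\omega^* )$ uses $|P|=\bigsqcup_k(P^* )_k$ (cells); $U\colon\mathrm{Elt}(\mathrm{Pol}_\omega)\to\mathrm{Elt}(\mathrm{Pol}_\omega^* )$ is the canonical embedding. An element is principal if every morphism into it whose underlying morphism is a monomorphism in $\mathrm{Pol}_\omega$ is an isomorphism; primitive if principal and every morphism into it from a principal element is an isomorphism. A plex is a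 primitive element of $\mathrm{Elt}(\mathrm{Pol}_\omega)$; a polyplex is a primitive element of $\mathrm{Elt}(\mathrm{Pol}_\omega^* )$. *)

(* omega-polygraphs, their free omega-precategories (as well-typed raw terms
   modulo the congruence generated by the precategory axioms), morphisms,
   categories of elements, principal / primitive elements, plexes and polyplexes. *)

Set Implicit Arguments.

Inductive term (G : nat -> Type) : Type :=
| tgen (k : nat) (g : G k)
| tid (t : term G)                  (* identity on t (dimension + 1) *)
| tcomp (i : nat) (u v : term G).

Arguments tgen {G} k g.
Arguments tid {G} t.
Arguments tcomp {G} i u v.

(* generating data: generators in each dimension, with source and target of
   (k+1)-generators given as raw terms (required below to be k-cells). *)
Record pgdata : Type := {
  gen : nat -> Type;
  gsrc : forall k, gen (S k) -> term gen;
  gtgt : forall k, gen (S k) -> term gen }.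

Section Free.
Variable D : pgdata.
Notation tm := (term (gen D)).

Definition gen_src (k : nat) : gen D k -> tm :=
  match k return gen D k -> tm with
  | 0 => fun g => tgen 0 g
  | S k' => fun g => gsrc D k' g
  end.
Definition gen_tgt (k : nat) : gen D k -> tm :=
  match k return gen D k -> tm with
  | 0 => fun g => tgen 0 g
  | S k' => fun g => gtgt D k' g
  end.

(* source / target of a term regarded as an n-cell (n >= 1) *)
Fixpoint tsrc (n : nat) (t : tm) : tm :=
  match t with
  | tgen k g => gen_src k g
  | tid u => u
  | tcomp i u v => if Nat.eqb (S i) n then tsrc n u
                   else tcomp i (tsrc n u) (tsrc n v)
  end.
Fixpoint ttgt (n : nat) (t : tm) : tm :=
  match t with
  | tgen k g => gen_tgt k g
  | tid u => u
  | tcomp i u v => if Nat.eqb (S i) n then ttgt n v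
                   else tcomp i (ttgt n u) (ttgt n v)
  end.

(* iterated source/target: from an n-cell down to dimension n - m *)
Fixpoint iter_src (m n : nat) (t : tm) : tm :=
  match m with 0 => t | S m' => iter_src m' (pred n) (tsrc n t) end.
Fixpoint iter_tgt (m n : nat) (t : tm) : tm :=
  match m with 0 => t | S m' => iter_tgt m' (pred n) (ttgt n t) end.
Definition srci (i n : nat) (t : tm) : tm := iter_src (n - i) n t.
Definition tgti (i n : nat) (t : tm) : tm := iter_tgt (n - i) n t.

Fixpoint idn (m : nat) (t : tm) : tm :=
  match m with 0 => t | S m' => tid (idn m' t) end.

(* wt n t : t is an n-cell of the free precategory;
   eqv n t u : t and u are equal n-cells of the free precategory. *)
Inductive wt : nat -> tm -> Prop :=
| wt_gen : forall k (g : gen D k), wt k (tgen k g)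
| wt_id : forall n t, wt n t -> wt (S n) (tid t)
| wt_comp : forall n i u v, i < n -> wt n u -> wt n v ->
    eqv i (tgti i n u) (srci i n v) -> wt n (tcomp i u v)
with eqv : nat -> tm -> tm -> Prop :=
| eqv_refl : forall n t, wt n t -> eqv n t t
| eqv_sym : forall n t u, eqv n t u -> eqv n u t
| eqv_trans : forall n t u w, eqv n t u -> eqv n u w -> eqv n t w
| eqv_id : forall n t t', eqv n t t' -> eqv (S n) (tid t) (tid t')
| eqv_comp : forall n i u u' v v', eqv n u u' -> eqv n v v' ->
    wt n (tcomp i u v) -> wt n (tcomp i u' v') ->
    eqv n (tcomp i u v) (tcomp i u' v')
| eqv_unit_l : forall n i u, i < n -> wt n u ->
    eqv n (tcomp i (idn (n - i) (srci i n u)) u) u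
| eqv_unit_r : forall n i u, i < n -> wt n u ->
    eqv n (tcomp i u (idn (n - i) (tgti i n u))) u
| eqv_assoc : forall n i u v w,
    wt n (tcomp i (tcomp i u v) w) -> wt n (tcomp i u (tcomp i v w)) ->
    eqv n (tcomp i (tcomp i u v) w) (tcomp i u (tcomp i v w))
| eqv_id_comp : forall n i u v, wt n (tcomp i u v) ->
    eqv (S n) (tid (tcomp i u v)) (tcomp i (tid u) (tid v)).

End Free.

Record polygraph : Type := {
  pdata :> pgdata;
  pg_src_wt : forall k (g : gen pdata (S k)), wt pdata k (gsrc pdata k g);
  pg_tgt_wt : forall k (g : gen pdata (S k)), wt pdata k (gtgt pdata k g);
  pg_glob_s : forall k (g : gen pdata (S (S k))),
      eqv pdata k (tsrc pdata (S k) (gsrc pdata (S k) g))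
                  (tsrc pdata (S k) (gtgt pdata (S k) g));
  pg_glob_t : forall k (g : gen pdata (S (S k))),
      eqv pdata k (ttgt pdata (S k) (gsrc pdata (S k) g))
                  (ttgt pdata (S k) (gtgt pdata (S k) g)) }.

Fixpoint tmap {G H : nat -> Type} (f : forall k, G k -> H k) (t : term G)
  : term H :=
  match t with
  | tgen k g => tgen k (f k g)
  | tid u => tid (tmap f u)
  | tcomp i u v => tcomp i (tmap f u) (tmap f v)
  end.

Record hom (P Q : polygraph) : Type := {
  hmap :> forall k, gen P k -> gen Q k;
  hom_src : forall k (g : gen P (S k)),
      eqv Q k (tmap hmap (gsrc P k g)) (gsrc Q k (hmap (S k) g));
  hom_tgt : forall k (g : gen P (S k)),
      eqv Q k (tmap hmap (gtgt P k g)) (gtgt Q k (hmap (S k) g)) }.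

Definition hom_eq {G H : nat -> Type} (F1 F2 : forall k, G k -> H k) :=
  forall k g, F1 k g = F2 k g.

Definition mono (P Q : polygraph) (F : hom P Q) : Prop :=
  forall (R : polygraph) (H1 H2 : hom R P),
    hom_eq (fun k g => F k (H1 k g)) (fun k g => F k (H2 k g)) ->
    hom_eq H1 H2.

Record eltP : Type := { ep : polygraph; ek : nat; eg : gen ep ek }.

Definition eltP_mor (X Y : eltP) (F : hom (ep X) (ep Y)) : Prop :=
  existT (gen (ep Y)) (ek X) (F (ek X) (eg X)) = existT (gen (ep Y)) (ek Y) (eg Y).

Definition eltP_iso (X Y : eltP) (F : hom (ep X) (ep Y)) : Prop :=
  eltP_mor X Y F /\
  exists G : hom (ep Y) (ep X), eltP_mor Y X G /\
    hom_eq (fun k g => G k (F k g)) (fun k g => g) /\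
    hom_eq (fun k g => F k (G k g)) (fun k g => g).

Definition principalP (X : eltP) : Prop :=
  forall (Y : eltP) (F : hom (ep Y) (ep X)),
    eltP_mor Y X F -> mono F -> eltP_iso Y X F.

Definition primitiveP (X : eltP) : Prop :=
  principalP X /\
  forall (Y : eltP) (F : hom (ep Y) (ep X)),
    principalP Y -> eltP_mor Y X F -> eltP_iso Y X F.

Definition plex (X : eltP) : Prop := primitiveP X.

Record eltC : Type := {
  cp : polygraph; cn : nat; ct : term (gen cp); cwt : wt cp cn ct }.

(* F^star(x) = y in P^star (equality of cells: same dimension, equivalent terms) *)
Definition eltC_mor (X Y : eltC) (F : hom (cp X) (cp Y)) : Prop :=
  cn X = cn Y /\ eqv (cp Y) (cn Y) (tmap F (ct X)) (ct Y).

Definition eltC_iso (X Y : eltC) (F : hom (cp X) (cp Y)) : Prop :=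
  eltC_mor X Y F /\
  exists G : hom (cp Y) (cp X), eltC_mor Y X G /\
    hom_eq (fun k g => G k (F k g)) (fun k g => g) /\
    hom_eq (fun k g => F k (G k g)) (fun k g => g).

Definition principalC (X : eltC) : Prop :=
  forall (Y : eltC) (F : hom (cp Y) (cp X)),
    eltC_mor Y X F -> mono F -> eltC_iso Y X F.

Definition primitiveC (X : eltC) : Prop :=
  principalC X /\
  forall (Y : eltC) (F : hom (cp Y) (cp X)),
    principalC Y -> eltC_mor Y X F -> eltC_iso Y X F.

Definition polyplex (X : eltC) : Prop := primitiveC X.

Definition U (X : eltP) : eltC :=
  {| cp := ep X; cn := ek X; ct := tgen (ek X) (eg X);
     cwt := @wt_gen (ep X) (ek X) (eg X) |}.

From Stdlib Require Import Arith Lia List Eqdep_dec.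
Import ListNotations.

(* A cell t of Q^* sent by F^* to a generator g of P is a generator h of Q with
   F h = g.  The list of top-dimensional generators of a cell is invariant under
   the precategory axioms and is transported by F^*, so t contains exactly one,
   h, and F h = g.  If t were not equal to h, it would be h whiskered by lower
   cells that are not all identities, and then the numbers of m-generators in
   the m-sources of t would exceed those of h in the lexicographic order read
   from the top dimension down.  These numbers are invariants of cells that F^*
   preserves, and F^* t = g = F^* h, so this is impossible.  Hence a morphism
   into U(P,g) is, up to equality of cells, a morphism into (P,g), and
   principality and primitivity transfer along U. *)

Scheme wt_ind2 := Induction for wt Sort Prop
  with eqv_ind2 := Induction for eqv Sort Prop.
Combined Scheme wt_eqv_ind from wt_ind2, eqv_ind2.

Section Boundaries.
Variable D : pgdata.

Lemma tsrc_comp_top n i u v : S i = n -> tsrc D n (tcomp i u v) = tsrc D n u.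
Proof. intros <-. cbn [tsrc]. now rewrite Nat.eqb_refl. Qed.

Lemma ttgt_comp_top n i u v : S i = n -> ttgt D n (tcomp i u v) = ttgt D n v.
Proof. intros <-. cbn [ttgt]. now rewrite Nat.eqb_refl. Qed.

Lemma tsrc_comp_low n i u v : S i <> n ->
  tsrc D n (tcomp i u v) = tcomp i (tsrc D n u) (tsrc D n v).
Proof. intros H. cbn [tsrc]. now rewrite (proj2 (Nat.eqb_neq _ _) H). Qed.

Lemma ttgt_comp_low n i u v : S i <> n ->
  ttgt D n (tcomp i u v) = tcomp i (ttgt D n u) (ttgt D n v).
Proof. intros H. cbn [ttgt]. now rewrite (proj2 (Nat.eqb_neq _ _) H). Qed.

Lemma srci_diag n u : srci D n n u = u.
Proof. unfold srci. now rewrite Nat.sub_diag. Qed.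

Lemma tgti_diag n u : tgti D n n u = u.
Proof. unfold tgti. now rewrite Nat.sub_diag. Qed.

Lemma srci_S i m u : i <= m -> srci D i (S m) u = srci D i m (tsrc D (S m) u).
Proof. intros H. unfold srci. now replace (S m - i) with (S (m - i)) by lia. Qed.

Lemma tgti_S i m u : i <= m -> tgti D i (S m) u = tgti D i m (ttgt D (S m) u).
Proof. intros H. unfold tgti. now replace (S m - i) with (S (m - i)) by lia. Qed.

Lemma srci_Sdiag m u : srci D m (S m) u = tsrc D (S m) u.
Proof. rewrite srci_S by lia. apply srci_diag. Qed.

Lemma tgti_Sdiag m u : tgti D m (S m) u = ttgt D (S m) u.
Proof. rewrite tgti_S by lia. apply tgti_diag. Qed.

Lemma srci_comp_high i m n u v : i < m -> m <= n ->
  srci D m n (tcomp i u v) = tcomp i (srci D m n u) (srci D m n v).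
Proof.
  intros Him Hmn. unfold srci.
  assert (H : i + (n - m) < n) by lia. revert H.
  generalize (n - m) as k. intros k. clear Hmn. revert n u v.
  induction k as [|k IHk]; intros n u v Hk; [reflexivity|].
  cbn [iter_src]. rewrite tsrc_comp_low by lia. apply IHk. lia.
Qed.

Lemma idn_sub_S i m x : i <= m -> idn D (S m - i) x = tid (idn D (m - i) x).
Proof. intros H. now replace (S m - i) with (S (m - i)) by lia. Qed.

Lemma srci_idn i n x : srci D i n (idn D (n - i) x) = x.
Proof.
  unfold srci. generalize (n - i) as k. intros k. generalize n as d.
  induction k as [|k IHk]; intros d; [reflexivity|]. apply IHk.
Qed.

Lemma tgti_idn i n x : tgti D i n (idn D (n - i) x) = x.
Proof.
  unfold tgti. generalize (n - i) as k. intros k. generalize n as d.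
  induction k as [|k IHk]; intros d; [reflexivity|]. apply IHk.
Qed.

Lemma wt_idn i n x : i <= n -> wt D i x -> wt D n (idn D (n - i) x).
Proof.
  intros Hi w. replace n with ((n - i) + i) at 1 by lia.
  induction (n - i) as [|k IHk]; simpl; [exact w|]. now apply wt_id.
Qed.

Lemma eqv_idn i n x y : i <= n -> eqv D i x y ->
  eqv D n (idn D (n - i) x) (idn D (n - i) y).
Proof.
  intros Hi E. replace n with ((n - i) + i) at 1 by lia.
  induction (n - i) as [|k IHk]; simpl; [exact E|]. now apply eqv_id.
Qed.

Lemma wt_comp_inv n i u v : wt D n (tcomp i u v) ->
  i < n /\ wt D n u /\ wt D n v /\ eqv D i (tgti D i n u) (srci D i n v).
Proof. inversion 1; auto. Qed.

End Boundaries.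

Section Soundness.
Variable P : polygraph.

Definition bdry_wt n t : Prop := forall m, n = S m ->
  wt P m (tsrc P n t) /\ wt P m (ttgt P n t).

Definition globular n t : Prop := forall m, n = S (S m) ->
  eqv P m (tsrc P (S m) (tsrc P n t)) (tsrc P (S m) (ttgt P n t)) /\
  eqv P m (ttgt P (S m) (tsrc P n t)) (ttgt P (S m) (ttgt P n t)).

Definition bdry_eqv n t u : Prop := forall m, n = S m ->
  eqv P m (tsrc P n t) (tsrc P n u) /\ eqv P m (ttgt P n t) (ttgt P n u).

(* The derivation of a cell involves boundaries of lower-dimensional cells that
   are not subderivations, hence the induction on the dimension below. *)
Definition sound n : Prop :=
  (forall t, wt P n t -> bdry_wt n t /\ globular n t) /\
  (forall t u, eqv P n t u -> wt P n t /\ wt P n u /\ bdry_eqv n t u).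

Definition sound_upto N : Prop := forall d, d <= N -> sound d.

Lemma sound_gen k (g : gen P k) : bdry_wt k (tgen k g) /\ globular k (tgen k g).
Proof.
  split; intros m ->; simpl.
  - split; [apply pg_src_wt | apply pg_tgt_wt].
  - split; [apply pg_glob_s | apply pg_glob_t].
Qed.

Lemma bdry_eqv_comp n i u u' v v' :
  bdry_eqv n u u' -> bdry_eqv n v v' ->
  bdry_wt n (tcomp i u v) -> bdry_wt n (tcomp i u' v') ->
  bdry_eqv n (tcomp i u v) (tcomp i u' v').
Proof.
  intros Eu Ev W W' m ->.
  destruct (Eu m eq_refl), (Ev m eq_refl), (W m eq_refl), (W' m eq_refl).
  destruct (Nat.eq_dec i m) as [->|Hne].
  - rewrite !tsrc_comp_top, !ttgt_comp_top by reflexivity. auto.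
  - rewrite !tsrc_comp_low, !ttgt_comp_low in * by congruence.
    split; apply eqv_comp; auto.
Qed.

Lemma bdry_eqv_assoc n i u v w :
  bdry_wt n (tcomp i (tcomp i u v) w) -> bdry_wt n (tcomp i u (tcomp i v w)) ->
  bdry_eqv n (tcomp i (tcomp i u v) w) (tcomp i u (tcomp i v w)).
Proof.
  intros W W' m ->. destruct (W m eq_refl), (W' m eq_refl).
  destruct (Nat.eq_dec i m) as [->|Hne].
  - rewrite !tsrc_comp_top, !ttgt_comp_top in * by reflexivity.
    split; apply eqv_refl; assumption.
  - rewrite !tsrc_comp_low, !ttgt_comp_low in * by congruence.
    split; apply eqv_assoc; assumption.
Qed.

Lemma sound_tid_comp n i u v : wt P n (tcomp i u v) ->
  wt P (S n) (tid (tcomp i u v)) /\ wt P (S n) (tcomp i (tid u) (tid v)) /\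
  bdry_eqv (S n) (tid (tcomp i u v)) (tcomp i (tid u) (tid v)).
Proof.
  intros w. destruct (wt_comp_inv _ _ _ _ _ w) as (Hi & wu & wv & e).
  split; [now apply wt_id | split].
  - apply wt_comp; try lia; try now apply wt_id.
    rewrite tgti_S, srci_S by lia. exact e.
  - intros m [= <-]. rewrite tsrc_comp_low, ttgt_comp_low by lia.
    split; now apply eqv_refl.
Qed.

Section Step.
Variable N : nat.
Hypothesis HN : sound_upto N.

Lemma below_bdry_wt d t : d < N -> wt P (S d) t ->
  wt P d (tsrc P (S d) t) /\ wt P d (ttgt P (S d) t).
Proof. intros Hd w. exact (proj1 (proj1 (HN (S d) Hd) t w) d eq_refl). Qed.

Lemma below_eqv_wt d t u : d <= N -> eqv P d t u -> wt P d t /\ wt P d u.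
Proof. intros Hd E. now destruct (proj2 (HN d Hd) t u E) as (? & ? & _). Qed.

Lemma below_bdry_eqv d t u : d < N -> eqv P (S d) t u ->
  eqv P d (tsrc P (S d) t) (tsrc P (S d) u) /\ eqv P d (ttgt P (S d) t) (ttgt P (S d) u).
Proof. intros Hd E. exact (proj2 (proj2 (proj2 (HN (S d) Hd) t u E)) d eq_refl). Qed.

Lemma below_srci_wt M x i : M <= N -> wt P M x -> i <= M ->
  wt P i (srci P i M x) /\ wt P i (tgti P i M x).
Proof.
  induction M as [|M IHM] in x |- *; intros HM w Hi.
  - replace i with 0 by lia. now rewrite srci_diag, tgti_diag.
  - destruct (Nat.eq_dec i (S M)) as [->|Hne].
    + now rewrite srci_diag, tgti_diag.
    + rewrite srci_S, tgti_S by lia. destruct (below_bdry_wt M x HM w).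
      split; apply IHM; auto; lia.
Qed.

Lemma below_srci_eqv M x y i : M <= N -> eqv P M x y -> i <= M ->
  eqv P i (srci P i M x) (srci P i M y) /\ eqv P i (tgti P i M x) (tgti P i M y).
Proof.
  induction M as [|M IHM] in x, y |- *; intros HM E Hi.
  - replace i with 0 by lia. now rewrite !srci_diag, !tgti_diag.
  - destruct (Nat.eq_dec i (S M)) as [->|Hne].
    + now rewrite !srci_diag, !tgti_diag.
    + rewrite !srci_S, !tgti_S by lia. destruct (below_bdry_eqv M x y HM E).
      split; apply IHM; auto; lia.
Qed.

Lemma below_parallel M t i : M <= N -> globular (S M) t -> i < M ->
  eqv P i (srci P i M (tsrc P (S M) t)) (srci P i M (ttgt P (S M) t)) /\
  eqv P i (tgti P i M (tsrc P (S M) t)) (tgti P i M (ttgt P (S M) t)).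
Proof.
  intros HM G Hi. destruct M as [|M]; [lia|].
  destruct (G M eq_refl) as [Gs Gt]. rewrite !srci_S, !tgti_S by lia.
  destruct (below_srci_eqv M _ _ i ltac:(lia) Gs ltac:(lia)) as [Es _].
  destruct (below_srci_eqv M _ _ i ltac:(lia) Gt ltac:(lia)) as [_ Et].
  auto.
Qed.

Lemma below_unit_l M i s x : M <= N -> i < M -> wt P M x ->
  eqv P i s (srci P i M x) -> eqv P M (tcomp i (idn P (M - i) s) x) x.
Proof.
  intros HM Hi w E. destruct (below_eqv_wt i s _ ltac:(lia) E) as [ws wx].
  apply eqv_trans with (tcomp i (idn P (M - i) (srci P i M x)) x);
    [|now apply eqv_unit_l].
  apply eqv_comp; [apply eqv_idn; auto; lia | now apply eqv_refl | |].
  - apply wt_comp; auto. apply wt_idn; auto; lia. now rewrite tgti_idn.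
  - exact (proj1 (below_eqv_wt M _ _ HM (eqv_unit_l Hi w))).
Qed.

Lemma below_unit_r M i s x : M <= N -> i < M -> wt P M x ->
  eqv P i (tgti P i M x) s -> eqv P M (tcomp i x (idn P (M - i) s)) x.
Proof.
  intros HM Hi w E. destruct (below_eqv_wt i _ s ltac:(lia) E) as [wx ws].
  apply eqv_trans with (tcomp i x (idn P (M - i) (tgti P i M x)));
    [|now apply eqv_unit_r].
  apply eqv_comp; [now apply eqv_refl | apply eqv_idn; auto using eqv_sym; lia | |].
  - apply wt_comp; auto. apply wt_idn; auto; lia. now rewrite srci_idn.
  - exact (proj1 (below_eqv_wt M _ _ HM (eqv_unit_r Hi w))).
Qed.

Lemma sound_tid t : wt P N t -> bdry_wt (S N) (tid t) /\ globular (S N) (tid t).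
Proof.
  intros w. split; intros d Hd; injection Hd as Hd; cbn [tsrc ttgt].
  - now subst d.
  - rewrite Hd in w. destruct (below_bdry_wt d t ltac:(lia) w).
    split; now apply eqv_refl.
Qed.

Lemma sound_eqv_tid t t' : eqv P N t t' ->
  wt P (S N) (tid t) /\ wt P (S N) (tid t') /\ bdry_eqv (S N) (tid t) (tid t').
Proof.
  intros E. destruct (below_eqv_wt N t t' (le_n N) E).
  split; [now apply wt_id | split; [now apply wt_id|]].
  intros d [= <-]. cbn [tsrc ttgt]. auto.
Qed.

Lemma bdry_wt_comp i u v : i < S N ->
  bdry_wt (S N) u -> bdry_wt (S N) v -> globular (S N) u -> globular (S N) v ->
  eqv P i (tgti P i (S N) u) (srci P i (S N) v) -> bdry_wt (S N) (tcomp i u v).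
Proof.
  intros Hi Bu Bv Gu Gv e d [= <-].
  destruct (Bu N eq_refl), (Bv N eq_refl).
  destruct (Nat.eq_dec i N) as [->|Hne].
  - rewrite tsrc_comp_top, ttgt_comp_top by reflexivity. auto.
  - rewrite tsrc_comp_low, ttgt_comp_low by congruence.
    rewrite tgti_S, srci_S in e by lia.
    destruct (below_parallel N u i (le_n N) Gu ltac:(lia)) as [_ Pu].
    destruct (below_parallel N v i (le_n N) Gv ltac:(lia)) as [Pv _].
    split; apply wt_comp; auto; try lia.
    + eapply eqv_trans; [exact Pu | exact e].
    + eapply eqv_trans; [exact e | exact Pv].
Qed.

Lemma globular_comp i u v : i < S N ->
  bdry_wt (S N) u -> bdry_wt (S N) v -> globular (S N) u -> globular (S N) v ->
  eqv P i (tgti P i (S N) u) (srci P i (S N) v) -> globular (S N) (tcomp i u v).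
Proof.
  intros Hi Bu Bv Gu Gv e d Hd.
  destruct (bdry_wt_comp i u v Hi Bu Bv Gu Gv e N eq_refl) as [Ws Wt].
  destruct (Gu d Hd) as [Gus Gut], (Gv d Hd) as [Gvs Gvt].
  injection Hd as Hd. clear Bu Bv Gu Gv.
  rewrite Hd in Hi, e, Ws, Wt, Gus, Gut, Gvs, Gvt |- *.
  destruct (Nat.eq_dec i (S d)) as [->|Hne1].
  - rewrite tsrc_comp_top, ttgt_comp_top by reflexivity.
    rewrite tgti_Sdiag, srci_Sdiag in e.
    destruct (below_bdry_eqv d _ _ ltac:(lia) e) as [Es Et].
    split; (eapply eqv_trans; [eassumption|]); (eapply eqv_trans; [eassumption|]);
      assumption.
  - rewrite tsrc_comp_low, ttgt_comp_low in * by congruence.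
    destruct (Nat.eq_dec i d) as [->|Hne2].
    + rewrite !tsrc_comp_top, !ttgt_comp_top by reflexivity. auto.
    + rewrite !tsrc_comp_low, !ttgt_comp_low by congruence.
      destruct (below_bdry_wt d _ ltac:(lia) Ws) as [Wss Wst].
      destruct (below_bdry_wt d _ ltac:(lia) Wt) as [Wts Wtt].
      rewrite tsrc_comp_low, ttgt_comp_low in * by congruence.
      split; apply eqv_comp; auto.
Qed.

Lemma sound_unit_l i u : i < S N -> wt P (S N) u -> bdry_wt (S N) u -> globular (S N) u ->
  wt P (S N) (tcomp i (idn P (S N - i) (srci P i (S N) u)) u) /\
  bdry_eqv (S N) (tcomp i (idn P (S N - i) (srci P i (S N) u)) u) u.
Proof.
  intros Hi w B G. destruct (B N eq_refl) as [ws wt'].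
  assert (wsrc : wt P i (srci P i (S N) u)).
  { rewrite srci_S by lia. exact (proj1 (below_srci_wt N _ i (le_n N) ws ltac:(lia))). }
  split.
  - apply wt_comp; auto. apply wt_idn; auto; lia. rewrite tgti_idn. now apply eqv_refl.
  - intros d [= <-]. destruct (Nat.eq_dec i N) as [->|Hne].
    + rewrite tsrc_comp_top, ttgt_comp_top by reflexivity.
      replace (S N - N) with 1 by lia. cbn [idn tsrc]. rewrite srci_Sdiag.
      split; now apply eqv_refl.
    + rewrite tsrc_comp_low, ttgt_comp_low, idn_sub_S by lia. cbn [tsrc ttgt].
      rewrite srci_S in * by lia.
      destruct (below_parallel N u i (le_n N) G ltac:(lia)) as [Par _].
      split; apply below_unit_l; auto; lia || now apply eqv_refl.
Qed.

Lemma sound_unit_r i u : i < S N -> wt P (S N) u -> bdry_wt (S N) u -> globular (S N) u ->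
  wt P (S N) (tcomp i u (idn P (S N - i) (tgti P i (S N) u))) /\
  bdry_eqv (S N) (tcomp i u (idn P (S N - i) (tgti P i (S N) u))) u.
Proof.
  intros Hi w B G. destruct (B N eq_refl) as [ws wt'].
  assert (wtgt : wt P i (tgti P i (S N) u)).
  { rewrite tgti_S by lia. exact (proj2 (below_srci_wt N _ i (le_n N) wt' ltac:(lia))). }
  split.
  - apply wt_comp; auto. apply wt_idn; auto; lia. rewrite srci_idn. now apply eqv_refl.
  - intros d [= <-]. destruct (Nat.eq_dec i N) as [->|Hne].
    + rewrite tsrc_comp_top, ttgt_comp_top by reflexivity.
      replace (S N - N) with 1 by lia. cbn [idn ttgt]. rewrite tgti_Sdiag.
      split; now apply eqv_refl.
    + rewrite tsrc_comp_low, ttgt_comp_low, idn_sub_S by lia. cbn [tsrc ttgt].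
      rewrite tgti_S in * by lia.
      destruct (below_parallel N u i (le_n N) G ltac:(lia)) as [_ Par].
      split; apply below_unit_r; auto; try lia; now apply eqv_refl.
Qed.

End Step.

Lemma bdry_eqv_refl n t : bdry_wt n t -> bdry_eqv n t t.
Proof. intros B m Hm. destruct (B m Hm). split; now apply eqv_refl. Qed.

Lemma bdry_eqv_sym n t u : bdry_eqv n t u -> bdry_eqv n u t.
Proof. intros B m Hm. destruct (B m Hm). split; now apply eqv_sym. Qed.

Lemma bdry_eqv_trans n t u w : bdry_eqv n t u -> bdry_eqv n u w -> bdry_eqv n t w.
Proof.
  intros B B' m Hm. destruct (B m Hm), (B' m Hm).
  split; eapply eqv_trans; eassumption.
Qed.

Theorem soundness n : sound n.
Proof.
  induction n as [n IH] using lt_wf_ind.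
  assert (HN : forall N, S N = n -> sound_upto N) by (intros N <- d Hd; apply IH; lia).
  cut ((forall d t (w : wt P d t), d = n -> bdry_wt d t /\ globular d t) /\
       (forall d t u (E : eqv P d t u), d = n -> wt P d t /\ wt P d u /\ bdry_eqv d t u)).
  { intros [Hw He]. split; intros; [apply (Hw n) | apply (He n)]; auto. }
  apply (wt_eqv_ind P (fun d t _ => d = n -> bdry_wt d t /\ globular d t)
                      (fun d t u _ => d = n -> wt P d t /\ wt P d u /\ bdry_eqv d t u)).
  - intros k g _. apply sound_gen.
  - intros d t w _ <-. now apply (sound_tid d (HN d eq_refl)).
  - intros d i u v Hi _ IHu _ IHv e _ <-. destruct d as [|d]; [lia|].
    destruct (IHu eq_refl), (IHv eq_refl).
    split; [apply (bdry_wt_comp d (HN d eq_refl)) | apply (globular_comp d (HN d eq_refl))];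
      auto.
  - intros d t w IHw Hd. destruct (IHw Hd). auto using bdry_eqv_refl.
  - intros d t u _ IHE Hd. destruct (IHE Hd) as (? & ? & ?). auto using bdry_eqv_sym.
  - intros d t u w _ IHE _ IHE' Hd. destruct (IHE Hd) as (? & ? & ?), (IHE' Hd) as (? & ? & ?).
    eauto using bdry_eqv_trans.
  - intros d t t' E _ <-. exact (sound_eqv_tid d (HN d eq_refl) t t' E).
  - intros d i u u' v v' _ IHu _ IHv w IHw w' IHw' Hd.
    destruct (IHu Hd) as (_ & _ & ?), (IHv Hd) as (_ & _ & ?), (IHw Hd), (IHw' Hd).
    auto using bdry_eqv_comp.
  - intros d i u Hi w IHw <-. destruct d as [|d]; [lia|]. destruct (IHw eq_refl).
    destruct (sound_unit_l d (HN d eq_refl) i u); auto.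
  - intros d i u Hi w IHw <-. destruct d as [|d]; [lia|]. destruct (IHw eq_refl).
    destruct (sound_unit_r d (HN d eq_refl) i u); auto.
  - intros d i u v w W IHW W' IHW' Hd. destruct (IHW Hd), (IHW' Hd).
    auto using bdry_eqv_assoc.
  - intros d i u v w _ <-. now apply sound_tid_comp.
Qed.

Lemma sound_upto_all N : sound_upto N.
Proof. intros d _. apply soundness. Qed.

Lemma wt_bdry m t : wt P (S m) t -> wt P m (tsrc P (S m) t) /\ wt P m (ttgt P (S m) t).
Proof. intros w. exact (proj1 (proj1 (soundness (S m)) t w) m eq_refl). Qed.

Lemma eqv_wt n t u : eqv P n t u -> wt P n t /\ wt P n u.
Proof. intros E. now destruct (proj2 (soundness n) t u E) as (? & ? & _). Qed.

Lemma srci_eqv n x y i : eqv P n x y -> i <= n ->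
  eqv P i (srci P i n x) (srci P i n y) /\ eqv P i (tgti P i n x) (tgti P i n y).
Proof. apply (below_srci_eqv n (sound_upto_all n)), le_n. Qed.

Lemma eqv_unit_l_src n i s x : i < n -> wt P n x -> eqv P i s (srci P i n x) ->
  eqv P n (tcomp i (idn P (n - i) s) x) x.
Proof. apply (below_unit_l n (sound_upto_all n)), le_n. Qed.

Lemma eqv_unit_r_tgt n i s x : i < n -> wt P n x -> eqv P i (tgti P i n x) s ->
  eqv P n (tcomp i x (idn P (n - i) s)) x.
Proof. apply (below_unit_r n (sound_upto_all n)), le_n. Qed.

End Soundness.

Section Functoriality.
Variables P Q : polygraph.
Variable F : hom P Q.

Lemma tmap_idn k x : tmap F (idn P k x) = idn Q k (tmap F x).
Proof. induction k; simpl; congruence. Qed.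

Definition bdry_comm n t : Prop := forall m, n = S m ->
  eqv Q m (tmap F (tsrc P n t)) (tsrc Q n (tmap F t)) /\
  eqv Q m (tmap F (ttgt P n t)) (ttgt Q n (tmap F t)).

Definition srci_comm n t : Prop := forall i, i <= n ->
  eqv Q i (tmap F (srci P i n t)) (srci Q i n (tmap F t)) /\
  eqv Q i (tmap F (tgti P i n t)) (tgti Q i n (tmap F t)).

Definition functorial n : Prop :=
  (forall t, wt P n t -> wt Q n (tmap F t) /\ bdry_comm n t) /\
  (forall t u, eqv P n t u -> eqv Q n (tmap F t) (tmap F u)).

Definition functorial_upto N : Prop := forall d, d <= N -> functorial d.

Lemma srci_comm_S M x : (forall y, wt P M y -> srci_comm M y) ->
  wt P (S M) x -> wt Q (S M) (tmap F x) -> bdry_comm (S M) x -> srci_comm (S M) x.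
Proof.
  intros IH w w' C i Hi.
  destruct (Nat.eq_dec i (S M)) as [->|Hne].
  - rewrite !srci_diag, !tgti_diag. split; now apply eqv_refl.
  - rewrite !srci_S, !tgti_S by lia.
    destruct (C M eq_refl) as [Cs Ct], (wt_bdry P M x w) as [ws wt'].
    destruct (IH _ ws i ltac:(lia)) as [As _], (IH _ wt' i ltac:(lia)) as [_ At].
    destruct (srci_eqv Q M _ _ i Cs ltac:(lia)) as [Bs _].
    destruct (srci_eqv Q M _ _ i Ct ltac:(lia)) as [_ Bt].
    split; eapply eqv_trans; eassumption.
Qed.

Section Step.
Variable N : nat.
Hypothesis HN : functorial_upto N.

Lemma below_srci_comm M y : M <= N -> wt P M y -> srci_comm M y.
Proof.
  induction M as [|M IHM] in y |- *; intros HM w.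
  - intros i Hi. replace i with 0 by lia. rewrite !srci_diag, !tgti_diag.
    destruct (proj1 (HN 0 HM) y w). split; now apply eqv_refl.
  - destruct (proj1 (HN (S M) HM) y w).
    apply srci_comm_S; auto. intros z wz. apply IHM; auto; lia.
Qed.

Lemma top_srci_comm x : wt P (S N) x -> wt Q (S N) (tmap F x) -> bdry_comm (S N) x ->
  srci_comm (S N) x.
Proof. apply srci_comm_S. intros y. apply below_srci_comm, le_n. Qed.

Lemma functorial_tid t : wt P N t ->
  wt Q (S N) (tmap F (tid t)) /\ bdry_comm (S N) (tid t).
Proof.
  intros w. destruct (proj1 (HN N (le_n N)) t w) as [w' _].
  split; [now apply wt_id|]. intros d [= <-]. split; now apply eqv_refl.
Qed.

Lemma tmap_wt_comp i u v : i < S N ->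
  wt P (S N) u -> wt P (S N) v -> wt Q (S N) (tmap F u) -> wt Q (S N) (tmap F v) ->
  bdry_comm (S N) u -> bdry_comm (S N) v ->
  eqv P i (tgti P i (S N) u) (srci P i (S N) v) -> wt Q (S N) (tmap F (tcomp i u v)).
Proof.
  intros Hi wu wv wu' wv' Cu Cv e. apply wt_comp; auto.
  destruct (top_srci_comm u wu wu' Cu i ltac:(lia)) as [_ Tu].
  destruct (top_srci_comm v wv wv' Cv i ltac:(lia)) as [Sv _].
  eapply eqv_trans; [apply eqv_sym, Tu|].
  eapply eqv_trans; [apply (proj2 (HN i ltac:(lia)) _ _ e) | exact Sv].
Qed.

Lemma bdry_comm_comp i u v : wt P (S N) (tcomp i u v) -> wt Q (S N) (tmap F (tcomp i u v)) ->
  bdry_comm (S N) u -> bdry_comm (S N) v -> bdry_comm (S N) (tcomp i u v).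
Proof.
  intros w w' Cu Cv d [= <-].
  destruct (Cu N eq_refl), (Cv N eq_refl).
  destruct (Nat.eq_dec i N) as [->|Hne].
  - cbn [tmap]. rewrite !tsrc_comp_top, !ttgt_comp_top by reflexivity. auto.
  - destruct (wt_bdry P N _ w) as [ws wt'], (wt_bdry Q N _ w') as [ws' wt''].
    destruct (proj1 (HN N (le_n N)) _ ws) as [ws2 _].
    destruct (proj1 (HN N (le_n N)) _ wt') as [wt2 _].
    cbn [tmap] in *. rewrite !tsrc_comp_low, !ttgt_comp_low in * by congruence.
    split; apply eqv_comp; auto.
Qed.

Lemma tmap_unit_l i u : i < S N -> wt P (S N) u -> wt Q (S N) (tmap F u) -> bdry_comm (S N) u ->
  eqv Q (S N) (tmap F (tcomp i (idn P (S N - i) (srci P i (S N) u)) u)) (tmap F u).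
Proof.
  intros Hi w w' C. cbn [tmap]. rewrite tmap_idn.
  apply eqv_unit_l_src; auto. apply (top_srci_comm u w w' C i); lia.
Qed.

Lemma tmap_unit_r i u : i < S N -> wt P (S N) u -> wt Q (S N) (tmap F u) -> bdry_comm (S N) u ->
  eqv Q (S N) (tmap F (tcomp i u (idn P (S N - i) (tgti P i (S N) u)))) (tmap F u).
Proof.
  intros Hi w w' C. cbn [tmap]. rewrite tmap_idn.
  apply eqv_unit_r_tgt; auto. apply eqv_sym, (top_srci_comm u w w' C i); lia.
Qed.

End Step.

Theorem functoriality n : functorial n.
Proof.
  induction n as [n IH] using lt_wf_ind.
  assert (HN : forall N, S N = n -> functorial_upto N) by (intros N <- d Hd; apply IH; lia).
  cut ((forall d t (w : wt P d t), d = n -> wt Q d (tmap F t) /\ bdry_comm d t) /\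
       (forall d t u (E : eqv P d t u), d = n -> eqv Q d (tmap F t) (tmap F u))).
  { intros [Hw He]. split; intros; [apply (Hw n) | apply (He n)]; auto. }
  apply (wt_eqv_ind P (fun d t _ => d = n -> wt Q d (tmap F t) /\ bdry_comm d t)
                      (fun d t u _ => d = n -> eqv Q d (tmap F t) (tmap F u))).
  - intros k g _. split; [apply wt_gen|]. intros m ->. split; [apply hom_src | apply hom_tgt].
  - intros d t w _ <-. now apply (functorial_tid d (HN d eq_refl)).
  - intros d i u v Hi wu IHu wv IHv e _ <-. destruct d as [|d]; [lia|].
    destruct (IHu eq_refl), (IHv eq_refl).
    assert (w' : wt Q (S d) (tmap F (tcomp i u v))) by now apply (tmap_wt_comp d (HN d eq_refl)).
    split; [exact w'|]. apply (bdry_comm_comp d (HN d eq_refl)); auto. now apply wt_comp.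
  - intros d t w IHw Hd. apply eqv_refl, (IHw Hd).
  - intros d t u _ IHE Hd. now apply eqv_sym, IHE.
  - intros d t u w _ IHE _ IHE' Hd. eapply eqv_trans; [apply IHE | apply IHE']; assumption.
  - intros d t t' E _ <-. apply eqv_id, (proj2 (HN d eq_refl d (le_n d))), E.
  - intros d i u u' v v' _ IHu _ IHv _ IHw _ IHw' Hd.
    apply eqv_comp; [apply IHu | apply IHv | apply IHw | apply IHw']; assumption.
  - intros d i u Hi w IHw <-. destruct d as [|d]; [lia|]. destruct (IHw eq_refl).
    now apply (tmap_unit_l d (HN d eq_refl)).
  - intros d i u Hi w IHw <-. destruct d as [|d]; [lia|]. destruct (IHw eq_refl).
    now apply (tmap_unit_r d (HN d eq_refl)).
  - intros d i u v w _ IHW _ IHW' Hd. apply eqv_assoc; [apply IHW | apply IHW']; assumption.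
  - intros d i u v w _ <-. apply eqv_id_comp, (proj1 (HN d eq_refl d (le_n d)) _ w).
Qed.

Lemma tmap_eqv n t u : eqv P n t u -> eqv Q n (tmap F t) (tmap F u).
Proof. apply (proj2 (functoriality n)). Qed.

Lemma tmap_srci n x i : wt P n x -> i <= n ->
  eqv Q i (tmap F (srci P i n x)) (srci Q i n (tmap F x)).
Proof.
  intros w Hi. exact (proj1 (below_srci_comm n (fun d _ => functoriality d) n x (le_n n) w i Hi)).
Qed.

End Functoriality.

Fixpoint gens_at {G : nat -> Type} (n : nat) (t : term G) : list (sigT G) :=
  match t with
  | tgen k g => if Nat.eqb k n then [existT G k g] else []
  | tid _ => []
  | tcomp _ u v => gens_at n u ++ gens_at n v
  end.

Lemma gens_at_eqv (D : pgdata) n t u : eqv D n t u -> gens_at n t = gens_at n u.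
Proof.
  induction 1; simpl; try congruence.
  - destruct (n - i) eqn:E; [lia|]. reflexivity.
  - destruct (n - i) eqn:E; [lia|]. apply app_nil_r.
  - symmetry. apply app_assoc.
Qed.

Lemma gens_at_tmap {G H : nat -> Type} (f : forall k, G k -> H k) n t :
  gens_at n (tmap f t) = map (fun x => existT H (projT1 x) (f _ (projT2 x))) (gens_at n t).
Proof.
  induction t as [k g| |i u IHu v IHv]; simpl; auto.
  - now destruct (Nat.eqb k n).
  - now rewrite map_app, IHu, IHv.
Qed.

Lemma tgen_eqv_inj (D : pgdata) n (a b : gen D n) : eqv D n (tgen n a) (tgen n b) -> a = b.
Proof.
  intros E. apply gens_at_eqv in E. simpl in E. rewrite Nat.eqb_refl in E.
  injection E as E. exact (inj_pair2_eq_dec _ Nat.eq_dec _ _ _ _ E).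
Qed.

Definition src_count (D : pgdata) m n t : nat := length (gens_at m (srci D m n t)).

Lemma src_count_eqv (P : polygraph) n t u m : eqv P n t u -> m <= n ->
  src_count P m n t = src_count P m n u.
Proof.
  intros E Hm. unfold src_count.
  now rewrite (gens_at_eqv _ _ _ _ (proj1 (srci_eqv P n t u m E Hm))).
Qed.

Lemma src_count_tmap (P Q : polygraph) (F : hom P Q) n t m : wt P n t -> m <= n ->
  src_count Q m n (tmap F t) = src_count P m n t.
Proof.
  intros w Hm. unfold src_count.
  rewrite <- (gens_at_eqv _ _ _ _ (tmap_srci P Q F n t m w Hm)).
  now rewrite gens_at_tmap, length_map.
Qed.

Lemma src_count_comp_high (D : pgdata) i m n u v : i < m -> m <= n ->
  src_count D m n (tcomp i u v) = src_count D m n u + src_count D m n v.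
Proof. intros. unfold src_count. rewrite srci_comp_high by assumption. apply length_app. Qed.

Lemma all_zero_or_last_pos (f : nat -> nat) i n :
  (forall m, i < m < n -> f m = 0) \/
  exists J, i < J < n /\ 0 < f J /\ forall m, J < m < n -> f m = 0.
Proof.
  induction n as [|n IHn]; [left; lia|].
  destruct (Nat.lt_ge_cases i n) as [Hin|Hin]; [|left; lia].
  destruct (Nat.eq_dec (f n) 0) as [Hf|Hf].
  - destruct IHn as [Z|(J & HJ & Hpos & Z)]; [left|right].
    + intros m Hm. destruct (Nat.eq_dec m n) as [->|]; [exact Hf | apply Z; lia].
    + exists J. repeat split; try lia.
      intros m Hm. destruct (Nat.eq_dec m n) as [->|]; [exact Hf | apply Z; lia].
  - right. exists n. repeat split; lia.
Qed.

Definition lex_gt n (a b : nat -> nat) : Prop :=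
  exists J, J < n /\ b J < a J /\ forall m, J < m < n -> a m = b m.

Lemma lex_gt_irrefl n a : ~ lex_gt n a a.
Proof. intros (J & _ & H & _). lia. Qed.

Lemma lex_gt_trans n a b c : lex_gt n a b -> lex_gt n b c -> lex_gt n a c.
Proof.
  intros (J1 & H1 & H2 & H3) (J2 & K1 & K2 & K3).
  destruct (Nat.lt_total J1 J2) as [Hl|[<-|Hl]].
  - exists J2. rewrite H3 by lia. repeat split; auto.
    intros m Hm. rewrite H3 by lia. apply K3; lia.
  - exists J1. repeat split; auto; [lia|].
    intros m Hm. rewrite H3 by lia. apply K3; lia.
  - exists J1. rewrite <- K3 by lia. repeat split; auto.
    intros m Hm. rewrite H3 by lia. apply K3; lia.
Qed.

Lemma lex_gt_ext n a a' b b' :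
  (forall m, m < n -> a m = a' m) -> (forall m, m < n -> b m = b' m) ->
  lex_gt n a b -> lex_gt n a' b'.
Proof.
  intros Ha Hb (J & H1 & H2 & H3). exists J. rewrite <- Ha, <- Hb by lia.
  repeat split; auto. intros m Hm. rewrite <- Ha, <- Hb by lia. auto.
Qed.

Section NormalForm.
Variable P : polygraph.

Lemma eqv_comp_congr n i u u' v v' : eqv P n u u' -> eqv P n v v' ->
  wt P n (tcomp i u v) -> eqv P n (tcomp i u v) (tcomp i u' v').
Proof.
  intros Eu Ev w. destruct (wt_comp_inv _ _ _ _ _ w) as (Hi & wu & wv & e).
  apply eqv_comp; auto. apply wt_comp; auto.
  - exact (proj2 (eqv_wt P _ _ _ Eu)).
  - exact (proj2 (eqv_wt P _ _ _ Ev)).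
  - destruct (srci_eqv P n u u' i Eu ltac:(lia)) as [_ Tu].
    destruct (srci_eqv P n v v' i Ev ltac:(lia)) as [Sv _].
    eapply eqv_trans; [apply eqv_sym, Tu|]. eapply eqv_trans; [exact e | exact Sv].
Qed.

Lemma eqv_tid_of_gens_nil m u : wt P (S m) u -> gens_at (S m) u = [] ->
  eqv P (S m) u (tid (tsrc P (S m) u)).
Proof.
  intros w. remember (S m) as n eqn:En. revert m En.
  induction w as [k g | n t w _ | n i u v Hi wu IHu wv IHv e]; intros m En Hu.
  - subst. cbn [gens_at] in Hu. now rewrite Nat.eqb_refl in Hu.
  - apply eqv_refl, wt_id, w.
  - subst n. simpl in Hu. apply app_eq_nil in Hu as [Hu Hv].
    specialize (IHu m eq_refl Hu). specialize (IHv m eq_refl Hv).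
    pose proof (wt_comp Hi wu wv e) as w.
    destruct (Nat.eq_dec i m) as [->|Hne].
    + rewrite tsrc_comp_top by reflexivity.
      rewrite tgti_Sdiag, srci_Sdiag in e.
      eapply eqv_trans; [|exact IHu].
      eapply eqv_trans;
        [apply (eqv_comp_congr _ m u u v); [apply eqv_refl | exact IHv |]; assumption|].
      replace (tid (tsrc P (S m) v)) with (idn P (S m - m) (tsrc P (S m) v))
        by (now replace (S m - m) with 1 by lia).
      apply eqv_unit_r_tgt; auto. now rewrite tgti_Sdiag.
    + rewrite tsrc_comp_low by lia.
      eapply eqv_trans; [exact (eqv_comp_congr _ _ _ _ _ _ IHu IHv w)|].
      apply eqv_sym, eqv_id_comp.
      destruct (wt_bdry P m _ w) as [ws _]. now rewrite tsrc_comp_low in ws by lia.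
Qed.

Lemma eqv_idn_of_no_gens n i u : i < n -> wt P n u -> gens_at n u = [] ->
  (forall m, i < m < n -> src_count P m n u = 0) ->
  eqv P n u (idn P (n - i) (srci P i n u)).
Proof.
  induction n as [|n IHn] in u |- *; intros Hi w Hu Z; [lia|].
  eapply eqv_trans; [exact (eqv_tid_of_gens_nil n u w Hu)|].
  destruct (Nat.eq_dec i n) as [->|Hne].
  - replace (S n - n) with 1 by lia. rewrite srci_Sdiag. now apply eqv_refl, wt_id, wt_bdry.
  - rewrite idn_sub_S, srci_S by lia. apply eqv_id, IHn; try lia.
    + now apply wt_bdry.
    + apply length_zero_iff_nil. rewrite <- srci_Sdiag. apply Z. lia.
    + intros m Hm. unfold src_count. rewrite <- srci_S by lia. apply Z. lia.
Qed.

Definition eqv_or_heavier n t u : Prop :=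
  eqv P n t u \/ lex_gt n (fun m => src_count P m n t) (fun m => src_count P m n u).

Lemma eqv_or_heavier_trans n t u w :
  eqv_or_heavier n t u -> eqv_or_heavier n u w -> eqv_or_heavier n t w.
Proof.
  intros [E|L] [E'|L'].
  - left. eapply eqv_trans; eassumption.
  - right. eapply lex_gt_ext; [| |exact L']; intros m Hm; [|reflexivity].
    apply src_count_eqv; [now apply eqv_sym | lia].
  - right. eapply lex_gt_ext; [| |exact L]; intros m Hm; [reflexivity|].
    apply src_count_eqv; [assumption | lia].
  - right. eapply lex_gt_trans; eassumption.
Qed.

Lemma eqv_or_heavier_comp_l n i u v : wt P n (tcomp i u v) -> gens_at n u = [] ->
  eqv_or_heavier n (tcomp i u v) v.
Proof.
  intros w Hu. destruct (wt_comp_inv _ _ _ _ _ w) as (Hi & wu & wv & e).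
  destruct (all_zero_or_last_pos (fun m => src_count P m n u) i n)
    as [Z|(J & HJ & Hpos & Z)].
  - left. pose proof (eqv_idn_of_no_gens n i u Hi wu Hu Z) as Eu.
    destruct (srci_eqv P n _ _ i Eu ltac:(lia)) as [_ Et]. rewrite tgti_idn in Et.
    eapply eqv_trans; [apply (eqv_comp_congr _ _ _ _ v v Eu); auto using eqv_refl|].
    apply eqv_unit_l_src; auto. eapply eqv_trans; [apply eqv_sym, Et | exact e].
  - right. exists J. rewrite src_count_comp_high by lia. split; [lia|split]; [lia|].
    intros m Hm. rewrite src_count_comp_high, Z by lia. reflexivity.
Qed.

Lemma eqv_or_heavier_comp_r n i u v : wt P n (tcomp i u v) -> gens_at n v = [] ->
  eqv_or_heavier n (tcomp i u v) u.
Proof.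
  intros w Hv. destruct (wt_comp_inv _ _ _ _ _ w) as (Hi & wu & wv & e).
  destruct (all_zero_or_last_pos (fun m => src_count P m n v) i n)
    as [Z|(J & HJ & Hpos & Z)].
  - left. pose proof (eqv_idn_of_no_gens n i v Hi wv Hv Z) as Ev.
    eapply eqv_trans; [apply (eqv_comp_congr _ _ u u _ _ (eqv_refl wu) Ev w)|].
    apply eqv_unit_r_tgt; auto.
  - right. exists J. rewrite src_count_comp_high by lia. split; [lia|split]; [lia|].
    intros m Hm. rewrite src_count_comp_high, Z by lia. lia.
Qed.

Lemma eqv_or_heavier_gen n t h : wt P n t -> gens_at n t = [existT _ n h] ->
  eqv_or_heavier n t (tgen n h).
Proof.
  intros w. revert h.
  induction w as [k g | n t w _ | n i u v Hi wu IHu wv IHv e]; intros h Ht.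
  - left. cbn [gens_at] in Ht. rewrite Nat.eqb_refl in Ht.
    injection Ht as Ht. apply inj_pair2_eq_dec in Ht; [|exact Nat.eq_dec].
    subst. apply eqv_refl, wt_gen.
  - discriminate.
  - pose proof (wt_comp Hi wu wv e) as w. cbn [gens_at] in Ht.
    destruct (gens_at n u) as [|x r] eqn:Hu.
    + eapply eqv_or_heavier_trans; [apply eqv_or_heavier_comp_l | apply IHv]; auto.
    + injection Ht as -> Hr. apply app_eq_nil in Hr as [-> Hv].
      eapply eqv_or_heavier_trans; [apply eqv_or_heavier_comp_r | apply IHu]; auto.
Qed.

End NormalForm.

Lemma eqv_gen_of_tmap_eqv_gen (Q P : polygraph) (F : hom Q P) k t g :
  wt Q k t -> eqv P k (tmap F t) (tgen k g) -> exists h, F k h = g /\ eqv Q k t (tgen k h).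
Proof.
  intros w E.
  assert (Hg : map (fun x => existT _ (projT1 x) (F _ (projT2 x))) (gens_at k t)
               = [existT _ k g]).
  { rewrite <- gens_at_tmap, (gens_at_eqv _ _ _ _ E). cbn. now rewrite Nat.eqb_refl. }
  destruct (gens_at k t) as [|[j h] [|? ?]] eqn:Ht; try discriminate.
  injection Hg as -> Hg. apply inj_pair2_eq_dec in Hg; [|exact Nat.eq_dec].
  exists h. split; [exact Hg|].
  destruct (eqv_or_heavier_gen Q k t h w Ht) as [Eh|L]; [exact Eh|exfalso].
  apply (lex_gt_irrefl k (fun m => src_count Q m k t)).
  eapply lex_gt_ext; [| |exact L]; intros m Hm; [reflexivity|].
  rewrite <- (src_count_tmap Q P F k t m w), <- (src_count_tmap Q P F k (tgen k h) m)
    by (auto using wt_gen; lia).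
  cbn [tmap]. rewrite Hg. apply src_count_eqv; [now apply eqv_sym | lia].
Qed.

Lemma eltC_mor_U (X Y : eltP) (F : hom (ep Y) (ep X)) :
  eltC_mor (U Y) (U X) F <-> eltP_mor Y X F.
Proof.
  destruct X as [P k g], Y as [Q j h]. unfold eltC_mor, eltP_mor. cbn. split.
  - intros [-> E]. now rewrite (tgen_eqv_inj _ _ _ _ E).
  - intros E. assert (j = k) as -> by exact (f_equal (@projT1 _ _) E).
    apply inj_pair2_eq_dec in E; [|exact Nat.eq_dec].
    rewrite E. split; [reflexivity | apply eqv_refl, wt_gen].
Qed.

Lemma eltC_iso_U (X Y : eltP) (F : hom (ep Y) (ep X)) :
  eltC_iso (U Y) (U X) F <-> eltP_iso Y X F.
Proof.
  split; intros [HM (G & HG & HGF)]; (split; [now apply eltC_mor_U|]);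
    exists G; (split; [now apply eltC_mor_U | exact HGF]).
Qed.

Lemma eltC_mor_eqv_l (Q : polygraph) n t t' (w : wt Q n t) (w' : wt Q n t')
  (X : eltC) (F : hom Q (cp X)) :
  eqv Q n t t' -> eltC_mor (Build_eltC Q w) X F -> eltC_mor (Build_eltC Q w') X F.
Proof.
  intros E [Hn HF]. cbn in *. subst n. split; [reflexivity|].
  eapply eqv_trans; [apply tmap_eqv, eqv_sym, E | exact HF].
Qed.

Lemma eltC_mor_eqv_r (X : eltC) (Q : polygraph) n t t' (w : wt Q n t) (w' : wt Q n t')
  (F : hom (cp X) Q) :
  eqv Q n t t' -> eltC_mor X (Build_eltC Q w) F -> eltC_mor X (Build_eltC Q w') F.
Proof. intros E [Hn HF]. split; [exact Hn | eapply eqv_trans; eassumption]. Qed.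

Lemma eltC_iso_eqv_l (Q : polygraph) n t t' (w : wt Q n t) (w' : wt Q n t')
  (X : eltC) (F : hom Q (cp X)) :
  eqv Q n t t' -> eltC_iso (Build_eltC Q w) X F -> eltC_iso (Build_eltC Q w') X F.
Proof.
  intros E [HM (G & HG & HGF)]. split; [exact (eltC_mor_eqv_l _ _ _ _ _ _ _ _ E HM)|].
  exists G. split; [exact (eltC_mor_eqv_r _ _ _ _ _ _ _ _ E HG) | exact HGF].
Qed.

Lemma eltC_iso_eqv_r (X : eltC) (Q : polygraph) n t t' (w : wt Q n t) (w' : wt Q n t')
  (F : hom (cp X) Q) :
  eqv Q n t t' -> eltC_iso X (Build_eltC Q w) F -> eltC_iso X (Build_eltC Q w') F.
Proof.
  intros E [HM (G & HG & HGF)]. split; [exact (eltC_mor_eqv_r _ _ _ _ _ _ _ _ E HM)|].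
  exists G. split; [exact (eltC_mor_eqv_l _ _ _ _ _ _ _ _ E HG) | exact HGF].
Qed.

Lemma principalC_eqv (Q : polygraph) n t t' (w : wt Q n t) (w' : wt Q n t') :
  eqv Q n t t' -> principalC (Build_eltC Q w) -> principalC (Build_eltC Q w').
Proof.
  intros E HC Y F HM Hmono.
  apply (eltC_iso_eqv_r _ _ _ _ _ w _ _ E), HC; [|exact Hmono].
  exact (eltC_mor_eqv_r _ _ _ _ _ w' _ _ (eqv_sym E) HM).
Qed.

Lemma eltC_iso_cell_eqv_gen (X : eltP) (Q : polygraph) t (w : wt Q (ek X) t)
  (h : gen Q (ek X)) (F : hom Q (ep X)) :
  eqv Q (ek X) t (tgen (ek X) h) -> eltP_iso (Build_eltP Q (ek X) h) X F ->
  eltC_iso (Build_eltC Q w) (U X) F.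
Proof.
  intros E HI. apply (eltC_iso_eqv_l _ _ _ _ (wt_gen _ _ h) w _ _ (eqv_sym E)).
  now apply (eltC_iso_U X (Build_eltP Q (ek X) h)).
Qed.

Lemma principalP_iff_U (X : eltP) : principalP X <-> principalC (U X).
Proof.
  split.
  - intros HP [Q n t w] F [Hn HF] Hmono. cbn in Hn, HF. subst n.
    destruct (eqv_gen_of_tmap_eqv_gen _ _ F _ _ _ w HF) as (h & Fh & Eh).
    apply (eltC_iso_cell_eqv_gen X Q t w h F Eh), HP; [|exact Hmono].
    exact (f_equal (existT _ (ek X)) Fh).
  - intros HC Y F HM Hmono. apply eltC_iso_U, HC; [apply eltC_mor_U|]; assumption.
Qed.

Lemma plex_iff_polyplex_U (X : eltP) : plex X <-> polyplex (U X).
Proof.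
  split.
  - intros [HP Hprim]. split; [now apply principalP_iff_U|].
    intros [Q n t w] F HY [Hn HF]. cbn in Hn, HF. subst n.
    destruct (eqv_gen_of_tmap_eqv_gen _ _ F _ _ _ w HF) as (h & Fh & Eh).
    apply (eltC_iso_cell_eqv_gen X Q t w h F Eh), Hprim.
    + apply principalP_iff_U. exact (principalC_eqv _ _ _ _ w _ Eh HY).
    + exact (f_equal (existT _ (ek X)) Fh).
  - intros [HC Hprim]. split; [now apply principalP_iff_U|].
    intros Y F HY HM.
    apply eltC_iso_U, Hprim; [apply principalP_iff_U | apply eltC_mor_U]; assumption.
Qed.

Theorem proposition6p2 (P : polygraph) (k : nat) (g : gen P k) :
  (principalP {| ep := P; ek := k; eg := g |} <->
   principalC (U {| ep := P; ek := k; eg := g |})) /\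
  (plex {| ep := P; ek := k; eg := g |} <->
   polyplex (U {| ep := P; ek := k; eg := g |})).
Proof. split; [apply principalP_iff_U | apply plex_iff_polyplex_U]. Qed.
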